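(* Every connected $\mathrm{NP}_2$-digital H-space $(X,e,\mu)$ has $X$ $\mathrm{NP}_2$-contractible.
   Context: A digital image is a finite set $X\subset\mathbb{Z}^n$ with a reflexive symmetric adjacency relation (a finite reflexive graph); continuous maps send adjacent points to adjacent points; connectedness is graph connectedness. On products, $\mathrm{NP}_2$ declares two tuples adjacent iff coordinates are adjacent in at most 2 positions and equal elsewhere. An $\mathrm{NP}_2$-homotopy from $f$ to $g:X\to Y$ is an $\mathrm{NP}_2$-continuous $H:X\times[0,m]_{\mathbb{Z}}\to Y$ with $H(\cdot,0)=f$, $H(\cdot,m)=g$; write $f\simeq_2 g$. $\mathrm{NP}_2$-contractible means $\mathrm{NP}_2$-homotopy equivalent to a single point. An $\mathrm{NP}_2$-digital H-space is $(X,e,\mu)$ with $\mu:X\times X\to X$ $\mathrm{NP}_2$-continuous, $\mu\circ(\mathrm{id}_X,c_e)\simeq_2\mathrm{id}_X$, $\mu\circ(c_e,\mathrm{id}_X)\simeq_2\mathrm{id}_X$, where $(f,g)(x)=(f(x),g(x))$ and $c_e$ is constant at $e$ (homotopies need not be pointed). *)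

(* Digital images modelled as finite reflexive symmetric graphs
   (finType T with adjacency adj : rel T). *)
From mathcomp Require Import all_boot.
Set Implicit Arguments. Unset Strict Implicit. Unset Printing Implicit Defensive.

Definition dcont (T U : Type) (aT : rel T) (aU : rel U) (f : T -> U) : Prop :=
  forall x y, aT x y -> aU (f x) (f y).

(* NP_2 adjacency on a product of two factors: coordinates adjacent in at most
   2 positions and equal elsewhere; with two (reflexive) factors this means
   both coordinates are adjacent. *)
Definition NP2 (T U : Type) (aT : rel T) (aU : rel U) : rel (T * U) :=
  fun p q => aT p.1 q.1 && aU p.2 q.2.

(* c_1 adjacency on the digital interval [0,m]_Z, represented by 'I_m.+1 *)
Definition c1 (m : nat) : rel 'I_m.+1 :=
  fun s t => (s <= t.+1) && (t <= s.+1).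

Definition NP2_homotopic (T U : Type) (aT : rel T) (aU : rel U) (f g : T -> U) : Prop :=
  exists (m : nat) (H : T * 'I_m.+1 -> U),
    [/\ dcont (NP2 aT (@c1 m)) aU H,
        forall x, H (x, ord0) = f x &
        forall x, H (x, ord_max) = g x].

Definition NP2_homotopy_equivalent (T U : Type) (aT : rel T) (aU : rel U) : Prop :=
  exists (f : T -> U) (g : U -> T),
    [/\ dcont aT aU f, dcont aU aT g,
        NP2_homotopic aT aT (g \o f) id & NP2_homotopic aU aU (f \o g) id].

Definition point_adj : rel unit := fun _ _ => true.

Definition NP2_contractible (T : Type) (aT : rel T) : Prop :=
  NP2_homotopy_equivalent aT point_adj.

Definition NP2_Hspace (T : Type) (aT : rel T) (e : T) (mu : T * T -> T) : Prop :=
  [/\ dcont (NP2 aT aT) aT mu,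
      NP2_homotopic aT aT (fun x => mu (x, e)) id &
      NP2_homotopic aT aT (fun x => mu (e, x)) id].

Definition dconnected (T : finType) (aT : rel T) : Prop :=
  forall x y : T, connect aT x y.

From mathcomp Require Import all_boot.
From mathcomp Require Import zify.
Set Implicit Arguments. Unset Strict Implicit. Unset Printing Implicit Defensive.

(* A homotopy on [0,m]_Z is a finite chain of continuous maps, consecutive ones
   sending adjacent points to adjacent points. Starting from the identity, fold
   a point of the image of a retraction onto a point dominating it until the
   image is rigid (no point is dominated by another one); the retraction stays
   homotopic to the identity. Rigidity forces every map [f] homotopic to the
   identity to satisfy [r (f x) = x] on the image of [r], and connectedness
   moves this along the second argument of [mu], so that [r (mu (x, y)) = x]
   and symmetrically [r (mu (y, x)) = x] for all [x] in the image. Comparing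
   the two at [x = r a], [y = r e] shows that [r] is constant, hence the
   identity is homotopic to a constant map. *)

Section StepHomotopy.

Variables (T : Type) (adj : rel T).

Definition adj_step (f g : T -> T) : Prop := forall a b, adj a b -> adj (f a) (g b).

Definition step_homotopic (f g : T -> T) : Prop :=
  exists m (F : nat -> T -> T),
    [/\ F 0 =1 f, F m =1 g, forall t, t <= m -> dcont adj adj (F t)
      & forall t, t < m -> adj_step (F t) (F t.+1)].

Lemma step_homotopic_refl f : dcont adj adj f -> step_homotopic f f.
Proof. by move=> f_cont; exists 0, (fun _ => f); split. Qed.

Lemma step_homotopic_cont f g : step_homotopic f g -> dcont adj adj f.
Proof. by case=> m [F [F0 _ F_cont _]] x y xy; rewrite -!F0; apply: F_cont. Qed.

Lemma eq_step_homotopic f f' g : f =1 f' -> step_homotopic f g -> step_homotopic f' g.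
Proof.
by move=> eq_f [m [F [F0 Fm F_cont F_step]]]; exists m, F; split=> // x; rewrite F0 eq_f.
Qed.

Lemma step_homotopic_cons f g h :
  dcont adj adj f -> adj_step f g -> step_homotopic g h -> step_homotopic f h.
Proof.
move=> f_cont fg [m [F [F0 Fm F_cont F_step]]].
exists m.+1, (fun t => if t is t'.+1 then F t' else f); split=> //.
- by case=> [|t] // /F_cont.
- case=> [|t] /= tm; last exact: F_step.
  by move=> a b ab; rewrite F0; apply: fg.
Qed.

Lemma step_homotopic_ind (P : (T -> T) -> Prop) f g :
  P g -> (forall f f', adj_step f f' -> P f' -> P f) ->
  step_homotopic f g -> P f.
Proof.
move=> Pg P_step [m [F [F0 Fm F_cont F_step]]].
have P_end : P (F m).
  by apply: P_step Pg => a b ab; rewrite -Fm; apply: F_cont.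
have P_F k : k <= m -> P (F (m - k)).
  elim: k => [|k IHk] km; first by rewrite subn0.
  have m_k : m - k = (m - k.+1).+1 by lia.
  apply: P_step (F_step _ _) _; first lia.
  by rewrite -m_k; apply: IHk; lia.
have := P_F m (leqnn m); rewrite subnn; apply: P_step => a b ab.
by rewrite -F0; apply: F_cont.
Qed.

Lemma NP2_homotopic_step f g : NP2_homotopic adj adj f g -> step_homotopic f g.
Proof.
case=> m [H [H_cont H0 Hm]].
exists m, (fun t x => H (x, inord t)); split.
- by move=> x /=; rewrite -H0; congr H; congr pair; apply: val_inj; rewrite /= inordK.
- by move=> x /=; rewrite -Hm; congr H; congr pair; apply: val_inj; rewrite /= inordK.
- by move=> t tm x y xy; apply: H_cont; rewrite /NP2 /= xy /c1 /= !inordK; lia.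
- by move=> t tm x y xy; apply: H_cont; rewrite /NP2 /= xy /c1 /= !inordK; lia.
Qed.

Hypothesis adj_sym : symmetric adj.

Lemma step_homotopic_NP2 f g : step_homotopic f g -> NP2_homotopic adj adj f g.
Proof.
case=> m [F [F0 Fm F_cont F_step]].
exists m, (fun p => F (nat_of_ord p.2) p.1); split=> //=.
move=> [x s] [y t] /andP [/= xy /andP [st ts]].
have sm := ltn_ord s; have tm := ltn_ord t.
have [s_t|[s_t|t_s]] : s = t :> nat \/ s.+1 = t \/ t.+1 = s by lia.
- by rewrite s_t; apply: F_cont => //; lia.
- by rewrite -s_t; apply: F_step => //; lia.
- by rewrite -t_s adj_sym; apply: F_step; [lia | rewrite adj_sym].
Qed.

End StepHomotopy.

Lemma dconnected_ind (T : finType) (adj : rel T) (P : T -> Prop) e :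
  dconnected adj -> P e -> (forall a b, adj a b -> P a -> P b) -> forall y, P y.
Proof.
move=> adj_conn Pe P_step y; case/connectP: (adj_conn e y) => p.
elim: p e Pe => [|b p IHp] a Pa /= => [_ ->|/andP [ab p_path] y_last] //.
by apply: IHp (P_step _ _ ab Pa) p_path y_last.
Qed.

Section Retraction.

Variables (T : finType) (adj : rel T).

Definition dominated (A : {set T}) x y := [forall z in A, adj x z ==> adj y z].

Definition rigid (A : {set T}) :=
  [forall x in A, forall y in A, dominated A x y ==> (y == x)].

Variable r : T -> T.
Hypothesis r_cont : dcont adj adj r.

Let A := [set r a | a : T].

Lemma rigid_fix_step g h : rigid A ->
  adj_step adj g h -> {in A, forall x, r (h x) = x} -> {in A, forall x, r (g x) = x}.
Proof.
move=> /forall_inP A_rigid gh rh x xA; apply/eqP.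
have rgxA : r (g x) \in A by apply: imset_f.
apply: (implyP (forall_inP (A_rigid x xA) _ rgxA)).
apply/forall_inP=> z zA; apply/implyP=> xz.
by rewrite -(rh z zA); apply/r_cont/gh.
Qed.

Hypothesis r_idem : idempotent_fun r.

Lemma retraction_id : {in A, forall x, r x = x}.
Proof. by move=> _ /imsetP [a _ ->]; apply: r_idem. Qed.

Lemma rigid_fix_homotopic f : rigid A ->
  step_homotopic adj f id -> {in A, forall x, r (f x) = x}.
Proof.
move=> A_rigid.
apply: (step_homotopic_ind (P := fun h => {in A, forall x, r (h x) = x})) retraction_id _.
by move=> g h; apply: rigid_fix_step.
Qed.

Hypothesis adj_sym : symmetric adj.

(* Folding [x] onto [y] keeps [r] homotopic to [id]: the folded map is one step
   away from [r] because [y] is adjacent to every neighbour of [x] in [A]. *)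
Lemma fold_retraction x y :
  step_homotopic adj r id -> x \in A -> y \in A -> dominated A x y -> y != x ->
  exists r' : T -> T, [/\ idempotent_fun r', step_homotopic adj r' id
                        & #|[set r' a | a : T]| < #|A|].
Proof.
move=> r_hom xA yA /forall_inP x_dom y_x.
pose g z := if z == x then y else z.
have gA u : u \in A -> g u \in A by rewrite /g; case: eqP.
have g_x u : g u != x by rewrite /g; case: (eqVneq u x).
have g_step u v : v \in A -> adj u v -> adj (g u) v.
  by rewrite /g; case: eqP => [-> vA xv|//]; apply: (implyP (x_dom v vA)).
have rA a : r a \in A by apply: imset_f.
exists (g \o r); split.
- by move=> a /=; rewrite retraction_id ?gA // /g (negbTE (g_x _)).
- have gr_r : adj_step adj (g \o r) r by move=> a b ab; apply/g_step/r_cont.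
  apply: (step_homotopic_cons _ gr_r r_hom) => a b ab /=.
  by apply: g_step; rewrite ?gA // adj_sym; apply: gr_r; rewrite adj_sym.
- apply/proper_card/properP; split.
    by apply/subsetP=> _ /imsetP [a _ ->]; apply: gA.
  by exists x => //; apply/imsetP=> [[a _ /eqP]]; rewrite eq_sym (negbTE (g_x _)).
Qed.

(* Moving the parameter [y] of [x |-> nu (x, y)] to an adjacent point is a
   single homotopy step, so [r (nu (x, y)) = x] spreads from [y = e] to all [y]. *)
Lemma rigid_fix_connected e (nu : T * T -> T) : dconnected adj -> rigid A ->
  dcont (NP2 adj adj) adj nu -> step_homotopic adj (fun x => nu (x, e)) id ->
  forall y, {in A, forall x, r (nu (x, y)) = x}.
Proof.
move=> adj_conn A_rigid nu_cont nu_hom.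
apply: (dconnected_ind (P := fun y => {in A, forall x, r (nu (x, y)) = x}) adj_conn).
  exact: (rigid_fix_homotopic A_rigid nu_hom).
move=> y y' yy' fix_y; apply: rigid_fix_step fix_y => // a b ab.
by apply: nu_cont; rewrite /NP2 /= ab adj_sym.
Qed.

End Retraction.

Lemma exists_rigid_retraction (T : finType) (adj : rel T) : symmetric adj ->
  exists r : T -> T, [/\ idempotent_fun r, step_homotopic adj r id
                       & rigid adj [set r a | a : T]].
Proof.
move=> adj_sym.
suff rigid_below n r : #|[set r a | a : T]| <= n ->
    idempotent_fun r -> step_homotopic adj r id ->
    exists r : T -> T, [/\ idempotent_fun r, step_homotopic adj r id
                         & rigid adj [set r a | a : T]].
  by apply: (rigid_below _ id (leqnn _)) => //; apply: step_homotopic_refl.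
elim: n r => [|n IHn] r A_n r_idem r_hom.
all: have [A_rigid|] := boolP (rigid adj [set r a | a : T]); first by exists r.
all: move=> /forall_inPn [x xA /forall_inPn [y yA]]; rewrite negb_imply => /andP [x_dom y_x].
all: have [r' [r'_idem r'_hom A'_lt]] :=
  fold_retraction (step_homotopic_cont r_hom) r_idem adj_sym r_hom xA yA x_dom y_x.
- by move: A'_lt; rewrite ltnNge (leq_trans A_n).
- by apply: (IHn r') => //; rewrite -ltnS (leq_trans A'_lt).
Qed.

Lemma Hspace_rigid_retraction_const (T : finType) (adj : rel T) e mu r :
  symmetric adj -> dconnected adj -> dcont (NP2 adj adj) adj mu ->
  step_homotopic adj (fun x => mu (x, e)) id ->
  step_homotopic adj (fun x => mu (e, x)) id ->
  dcont adj adj r -> idempotent_fun r -> rigid adj [set r a | a : T] ->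
  forall a, r a = r e.
Proof.
move=> adj_sym adj_conn mu_cont mu_l mu_r r_cont r_idem A_rigid a.
have mu_swap_cont : dcont (NP2 adj adj) adj (fun p => mu (p.2, p.1)).
  by move=> p q /andP [pq1 pq2]; apply: mu_cont; rewrite /NP2 /= pq1 pq2.
have rA b : r b \in [set r a | a : T] by apply: imset_f.
have fix_l := rigid_fix_connected r_cont r_idem adj_sym adj_conn A_rigid mu_cont mu_l.
have fix_r := rigid_fix_connected r_cont r_idem adj_sym adj_conn A_rigid mu_swap_cont mu_r.
by rewrite -(fix_l (r e) (r a) (rA a)) (fix_r (r a) (r e) (rA e)).
Qed.

Theorem mainTheorem13 (T : finType) (adj : rel T)
  (adj_refl : reflexive adj) (adj_sym : symmetric adj)
  (e : T) (mu : T * T -> T) :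
  NP2_Hspace adj e mu -> dconnected adj -> NP2_contractible adj.
Proof.
move=> [mu_cont /NP2_homotopic_step mu_l /NP2_homotopic_step mu_r] adj_conn.
have [r [r_idem r_hom A_rigid]] := exists_rigid_retraction adj_sym.
have r_const := Hspace_rigid_retraction_const adj_sym adj_conn mu_cont mu_l mu_r
  (step_homotopic_cont r_hom) r_idem A_rigid.
exists (fun _ => tt), (fun _ => r e); split=> //.
- by apply/(step_homotopic_NP2 adj_sym)/(eq_step_homotopic r_const).
- by exists 0, (fun p => p.1); split=> // [[]].
Qed.
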